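(* Let $A$ be an associative (not necessarily unital) algebra over a field which satisfies the identity $x_1x_2\cdots x_n=x_nx_{n-1}\cdots x_1$. Then $A$ satisfies the identity $x_1\cdots x_{n+1}=x_{\tau(1)}\cdots x_{\tau(n+1)}$ for every even permutation $\tau\in S_{n+1}$.
   Context: An identity is satisfied by $A$ if it holds upon substituting arbitrary elements of $A$ for the variables. *)

From HB Require Import structures.
From mathcomp Require Import all_boot all_order all_algebra all_fingroup.
Set Implicit Arguments. Unset Strict Implicit. Unset Printing Implicit Defensive.
Import GRing.Theory.
Local Open Scope ring_scope.

Definition nonunital_assoc_algebra (F : fieldType) (A : lmodType F)
    (mul : A -> A -> A) : Prop :=
  [/\ associative mul,
      (forall a b c, mul (a + b) c = mul a c + mul b c),
      (forall a b c, mul a (b + c) = mul a b + mul a c),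
      (forall (k : F) a b, mul (k *: a) b = k *: mul a b)
    & (forall (k : F) a b, mul a (k *: b) = k *: mul a b)].

(* The (nonempty) product x_0 x_1 ... x_m, left-bracketed, of a family
   indexed by 'I_m.+1 (bracketing is irrelevant by associativity). *)
Definition oprod (A : Type) (mul : A -> A -> A) (m : nat) (x : 'I_m.+1 -> A) : A :=
  foldl mul (x ord0) [seq x (lift ord0 i) | i <- enum 'I_m].

From HB Require Import structures.
From mathcomp Require Import all_boot all_order all_algebra all_fingroup.
From mathcomp Require Import zify.
Set Implicit Arguments. Unset Strict Implicit. Unset Printing Implicit Defensive.

(* Grouping the adjacent factors x_i x_(i+1) of a product of n + 1 factors into a
   single factor and applying the n-factor reversal identity shows that the product
   is invariant under k |-> s_i (n - k), where s_i swaps i and i + 1; composing two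
   such invariances gives invariance under s_j s_0 for every j.  The permutations
   leaving every product invariant form a group, which therefore contains t s_0 for
   every transposition t (conjugate by adjacent transpositions), hence every product
   of an even number of transpositions. *)

Definition tpermn (a b k : nat) : nat := if k == a then b else if k == b then a else k.

Section NatIndexedProducts.
Variables (A : Type) (mul : A -> A -> A).

Definition nprod (n : nat) (f : nat -> A) : A := foldl mul (f 0) [seq f k | k <- iota 1 n].

Lemma nprodS n f : nprod n.+1 f = mul (nprod n f) (f n.+1).
Proof. by rewrite /nprod -[n.+1]addn1 iotaD map_cat foldl_cat addnC. Qed.

Lemma eq_nprod n f g : (forall k, k <= n -> f k = g k) -> nprod n f = nprod n g.
Proof.
elim: n => [|n IHn] efg; first by rewrite /nprod efg.
by rewrite !nprodS IHn ?efg // => k le_kn; rewrite efg // ltnW.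
Qed.

Lemma oprodE n (x : 'I_n.+1 -> A) :
  oprod mul x = nprod n (fun k => x (inord k)).
Proof.
have xE (i : 'I_n.+1) : x i = x (inord i) by rewrite inord_val.
rewrite /oprod /nprod xE; congr foldl.
rewrite -[in RHS](addn0 1) iotaDl -val_enum_ord -!map_comp.
by apply: eq_map => i /=; rewrite xE lift0.
Qed.

Lemma eq_oprod n (x y : 'I_n.+1 -> A) :
  x =1 y -> oprod mul x = oprod mul y.
Proof. by move=> exy; rewrite !oprodE; apply: eq_nprod => k _; apply: exy. Qed.

Definition merge_at (i : nat) (f : nat -> A) (k : nat) : A :=
  if k < i then f k else if k == i then mul (f i) (f i.+1) else f k.+1.

Hypothesis mulA : associative mul.

Lemma nprod_merge_at n i f : i <= n -> nprod n.+1 f = nprod n (merge_at i f).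
Proof.
elim: n => [|n IHn] le_in; first by move: le_in; rewrite leqn0 => /eqP->.
rewrite nprodS; case: (ltngtP i n.+1) => [lt_in | lt_ni | ->].
- by rewrite IHn // nprodS /merge_at ltnNge ltnW //= gtn_eqF.
- by move: le_in; rewrite leqNgt lt_ni.
- rewrite !nprodS -mulA /merge_at ltnn eqxx; congr mul.
  by apply: eq_nprod => k le_kn; rewrite ltnS le_kn.
Qed.

Lemma merge_at_rev m i f k : i <= m -> k <= m ->
  merge_at i f (m - k) = merge_at (m - i) (fun j => f (tpermn i i.+1 (m.+1 - j))) k.
Proof.
move=> le_im le_km; rewrite /merge_at /tpermn.
by do ![case: ifP => ?]; first [done | congr f; lia | lia].
Qed.

Lemma nprod_rev_tpermn m i f :
  (forall g, nprod m g = nprod m (fun k => g (m - k))) -> i <= m ->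
  nprod m.+1 f = nprod m.+1 (fun k => f (tpermn i i.+1 (m.+1 - k))).
Proof.
move=> nprod_rev le_im.
rewrite (nprod_merge_at f le_im) nprod_rev (@nprod_merge_at m (m - i)) ?leq_subr //.
by apply: eq_nprod => k le_km; rewrite merge_at_rev.
Qed.

End NatIndexedProducts.

Lemma tperm_inordE n a b (z : 'I_n.+1) : a <= n -> b <= n ->
  val (tperm (inord a) (inord b) z) = tpermn a b z.
Proof.
move=> le_an le_bn; rewrite /tpermn.
have val_inordE c (w : 'I_n.+1) : c <= n -> (w == inord c) = (val w == c).
  by move=> le_cn; rewrite -(inj_eq val_inj) /= inordK.
case: tpermP => [->|->|/eqP neq_za /eqP neq_zb] /=; rewrite ?inordK ?eqxx //.
- by case: (b =P a).
- rewrite !val_inordE // in neq_za neq_zb.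
  by rewrite (negbTE neq_za) (negbTE neq_zb).
Qed.

Definition adjtperm n (i : nat) : 'S_n.+1 := tperm (inord i) (inord i.+1).

Definition oprod_invariant (A : Type) (mul : A -> A -> A) n (p : 'S_n.+1) : Prop :=
  forall x : 'I_n.+1 -> A, oprod mul x = oprod mul (fun i => x (p i)).

Section OprodInvariantGroup.
Variables (A : Type) (mul : A -> A -> A) (n : nat).

Lemma oprod_invariant1 : oprod_invariant mul (1 : 'S_n.+1)%g.
Proof. by move=> x; apply: eq_oprod => i; rewrite perm1. Qed.

Lemma oprod_invariantM (p q : 'S_n.+1) :
  oprod_invariant mul p -> oprod_invariant mul q -> oprod_invariant mul (p * q)%g.
Proof.
move=> inv_p inv_q x; rewrite inv_q inv_p.
by apply: eq_oprod => i; rewrite permM.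
Qed.

Lemma oprod_invariantV (p : 'S_n.+1) :
  oprod_invariant mul p -> oprod_invariant mul p^-1%g.
Proof.
move=> inv_p x; rewrite (inv_p (fun i => x (p^-1%g i))).
by apply: eq_oprod => i; rewrite permK.
Qed.

End OprodInvariantGroup.

Section ReversalIdentity.
Variables (A : Type) (mul : A -> A -> A) (m : nat).
Hypothesis mulA : associative mul.
Hypothesis oprod_rev :
  forall x : 'I_m.+1 -> A, oprod mul x = oprod mul (fun i => x (rev_ord i)).

Lemma nprod_rev f : nprod mul m f = nprod mul m (fun k => f (m - k)).
Proof.
have := oprod_rev (fun i => f i); rewrite !oprodE => eq_f.
transitivity (nprod mul m (fun k => f (@inord m k))).
  by apply: eq_nprod => k le_km; rewrite inordK.
by rewrite eq_f; apply: eq_nprod => k le_km; rewrite /= !inordK ?leq_subr.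
Qed.

Lemma oprod_rev_adjtperm i (x : 'I_m.+2 -> A) : i <= m ->
  oprod mul x = oprod mul (fun k => x (adjtperm m.+1 i (rev_ord k))).
Proof.
move=> le_im; rewrite !oprodE (nprod_rev_tpermn mulA _ nprod_rev le_im).
apply: eq_nprod => k le_km; congr x; apply: val_inj.
rewrite tperm_inordE ?(leqW le_im) //= !inordK //.
by rewrite /tpermn; do ![case: ifP => ?]; lia.
Qed.

Lemma oprod_invariant_adjtperm_pair j : j <= m ->
  oprod_invariant mul (adjtperm m.+1 j * adjtperm m.+1 0)%g.
Proof.
move=> le_jm x.
rewrite (oprod_rev_adjtperm x (leq0n m)) [RHS](oprod_rev_adjtperm _ le_jm).
by apply: eq_oprod => k; rewrite permM /adjtperm tpermK.
Qed.

End ReversalIdentity.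

Section EvenPermClosure.
Variables (T : finType) (P : {perm T} -> Prop).
Hypotheses (P1 : P 1%g) (PM : forall p q, P p -> P q -> P (p * q)%g)
  (PV : forall p, P p -> P p^-1%g).
Variable u : {perm T}.
Hypothesis uV : (u^-1 = u)%g.

Lemma even_perm_closure :
  (forall a b : T, a != b -> P (tperm a b * u)%g) -> forall s, ~~ odd_perm s -> P s.
Proof.
move=> Ptu s even_s; have [ts def_s dts] := prod_tpermP s.
rewrite def_s odd_perm_prod // in even_s *.
suff: P (u ^+ odd (size ts) * \prod_(t <- ts) tperm t.1 t.2)%g.
  by rewrite (negbTE even_s) mul1g.
elim: ts dts {def_s even_s} => [|[a b] ts IHts] /=; first by rewrite big_nil mulg1.
case/andP=> dab /IHts; rewrite big_cons /=; set pr := (\prod_(t <- ts) _)%g.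
case: (odd (size ts)) => /= Ppr; rewrite ?expg0 ?expg1 ?mul1g in Ppr *.
- have -> : (tperm a b * pr = (tperm a b * u) * (u * pr))%g.
    by rewrite -mulgA (mulgA u) -{1}uV mulVg mul1g.
  exact: PM (Ptu _ _ dab) Ppr.
- rewrite mulgA -{1}uV -tpermV -invMg.
  exact: PM (PV (Ptu _ _ dab)) Ppr.
Qed.

End EvenPermClosure.

Section AdjacentTranspositionClosure.
Variables (n : nat) (P : 'S_n.+1 -> Prop).
Hypotheses (PM : forall p q, P p -> P q -> P (p * q)%g) (PV : forall p, P p -> P p^-1%g).
Variable u : 'S_n.+1.

Lemma tperm_closure_adjtperm :
  (forall j, j < n -> P (adjtperm n j * u)%g) ->
  forall a b : 'I_n.+1, a != b -> P (tperm a b * u)%g.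
Proof.
move=> Padj.
suff Pdist d (a b : 'I_n.+1) : b = a + d.+1 :> nat -> P (tperm a b * u)%g.
  move=> a b; case: (ltngtP a b) => [lt_ab | lt_ba | /val_inj->]; last by rewrite eqxx.
  - by move=> _; apply: (Pdist (b - a).-1); lia.
  - by move=> _; rewrite tpermC; apply: (Pdist (a - b).-1); lia.
elim: d a b => [|d IHd] a b b_def; have lt_bn := ltn_ord b.
  have -> : tperm a b = adjtperm n a.
    by congr tperm; apply: val_inj; rewrite /= !inordK; lia.
  by apply: Padj; lia.
pose c : 'I_n.+1 := inord (a + d.+1).
have c_val : c = a + d.+1 :> nat by rewrite inordK //; lia.
have -> : tperm a b = (tperm a c ^ adjtperm n c)%g.
  rewrite tpermJ; congr tperm; apply: val_inj;
    by rewrite /= tperm_inordE ?c_val /tpermn; do ?[case: ifP => ?]; lia.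
rewrite conjgE tpermV; set s := adjtperm n c.
have -> : (s * (tperm a c * s) * u = (s * u) * ((tperm a c * u)^-1 * (s * u)))%g.
  by rewrite invMg tpermV !mulgA mulgK.
have Ps : P (s * u)%g by apply: Padj; lia.
exact: PM Ps (PM (PV (IHd _ _ c_val)) Ps).
Qed.

End AdjacentTranspositionClosure.

Theorem lemma3p2 (F : fieldType) (A : lmodType F) (mul : A -> A -> A)
    (m : nat) :
  nonunital_assoc_algebra mul ->
  (forall x : 'I_m.+1 -> A, oprod mul x = oprod mul (fun i => x (rev_ord i))) ->
  forall tau : 'S_m.+2, ~~ odd_perm tau ->
  forall x : 'I_m.+2 -> A, oprod mul x = oprod mul (fun i => x (tau i)).
Proof.
move=> [mulA _ _ _ _] oprod_rev tau even_tau.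
have invM := @oprod_invariantM A mul m.+1.
have invV := @oprod_invariantV A mul m.+1.
have s0V : ((adjtperm m.+1 0)^-1 = adjtperm m.+1 0)%g by exact: tpermV.
apply: (even_perm_closure (@oprod_invariant1 A mul m.+1) invM invV s0V) => //.
apply: (tperm_closure_adjtperm invM invV) => j lt_jm.
exact: oprod_invariant_adjtperm_pair.
Qed.
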